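(* Let $0<x_0\le1$ and $\epsilon\ge0$. Consider the eigenvalue problem $$L_0\Psi=\Phi,\qquad \Phi'+\frac{\epsilon}{1-x^2}\Phi=\mu\,\Psi',\qquad -x_0<x<x_0,$$ for $\Psi$ in the space $X_0$ if $x_0<1$ and in $X$ if $x_0=1$. Then every eigenvalue $\mu$ other than the trivial eigenvalue $\mu=0$ (whose eigenfunctions are the constants) is real and strictly negative.
   Context: $L_0=\frac{d}{dx}\left[(1-x^2)\frac{d}{dx}\right]$. ${\cal H}_0([-x_0,x_0])$ is the space of functions with $\int_{-x_0}^{x_0}(1-x^2)|\Psi'(x)|^2dx<\infty$. For $0<x_0<1$, $X_0=\{\Psi\in{\cal H}_0([-x_0,x_0]):\ \Psi'(\pm x_0)=0\}$; for $x_0=1$, $X=\{\Psi\in{\cal H}_0([-1,1]):\ \lim_{x\to\pm1}(1-x^2)\Psi'(x)=0\}$. $\Psi$ is determined up to an additive constant. A number $\mu\in\mathbb{C}$ is an eigenvalue if there is a nonzero $\Psi$ in the relevant space solving the system classically on $(-x_0,x_0)$ with $\Phi=L_0\Psi$. (This describes symmetry-preserving perturbations of a stationary flow on a sphere, $\epsilon$ being the Reynolds number.) *)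

From Stdlib Require Import Reals.
From Coquelicot Require Import Coquelicot.
Open Scope R_scope.

(* Psi : R -> C is a (nontrivial) eigenfunction of the problem
     L_0 Psi = Phi,   Phi' + eps/(1-x^2) Phi = mu Psi',   -x0 < x < x0,
   with L_0 = d/dx[(1-x^2) d/dx], in the space X_0 (x0 < 1) or X (x0 = 1).
   dPsi, Phi, dPhi are the classical derivatives Psi', Phi = ((1-x^2)Psi')',
   Phi' on the open interval. *)
Definition eigenfunction (x0 eps : R) (mu : C) (Psi : R -> C) : Prop :=
  exists dPsi Phi dPhi : R -> C,
    (forall x : R, - x0 < x < x0 ->
        is_derive Psi x (dPsi x)
     /\ is_derive (fun y : R => (RtoC (1 - y ^ 2) * dPsi y)%C) x (Phi x)
     /\ is_derive Phi x (dPhi x)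
     /\ (dPhi x + RtoC (eps / (1 - x ^ 2)) * Phi x = mu * dPsi x)%C)
    (* Psi in H_0([-x0,x0]) : int_{-x0}^{x0} (1-x^2) |Psi'|^2 dx < oo *)
    /\ ex_RInt_gen (fun x : R => (1 - x ^ 2) * (Cmod (dPsi x)) ^ 2)
                   (at_right (- x0)) (at_left x0)
    (* boundary conditions defining X_0 : Psi'(+-x0) = 0 *)
    /\ (x0 < 1 ->
          filterlim dPsi (at_right (- x0)) (locally (RtoC 0))
       /\ filterlim dPsi (at_left x0) (locally (RtoC 0)))
    (* boundary conditions defining X : lim_{x -> +-1} (1-x^2) Psi'(x) = 0 *)
    /\ (x0 = 1 ->
          filterlim (fun x : R => (RtoC (1 - x ^ 2) * dPsi x)%C)
                    (at_right (- 1)) (locally (RtoC 0))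
       /\ filterlim (fun x : R => (RtoC (1 - x ^ 2) * dPsi x)%C)
                    (at_left 1) (locally (RtoC 0)))
    /\ ~ (exists c : C, forall x : R, - x0 < x < x0 -> Psi x = c).

Definition is_eigenvalue (x0 eps : R) (mu : C) : Prop :=
  exists Psi : R -> C, eigenfunction x0 eps mu Psi.

From Stdlib Require Import Reals Lra Psatz.
From Coquelicot Require Import Coquelicot.
Open Scope R_scope.

(* With [u = (1 - x^2) Psi'] and [v = p Phi], where [p = ((1 + x) / (1 - x)) ^ (eps / 2)]
   is an integrating factor, the problem becomes the first-order system
   [u' = v / p], [v' = mu p u / (1 - x^2)].  For [alpha >= 0] the energy
   [E = alpha Re (v conj u) + beta Im (v conj u)] satisfies
   [E' = Re ((alpha - i beta) mu) p |u|^2 / (1 - x^2) + alpha |v|^2 / p].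
   The boundary conditions give [u -> 0] at [-x0] and [x0], and [v] stays bounded there:
   by integrating [v'] where [p / (1 - x^2)] is integrable, and otherwise (at [x = 1], and
   at [x = -1] when [eps = 0], by the symmetry [x -> -x]) by a Gronwall argument on an
   invariant cone.  So [E -> 0] at both ends, and if [Re ((alpha - i beta) mu) > 0] the
   nondecreasing [E] vanishes identically, forcing [u = 0], i.e. [Psi] constant.  The choices [(alpha, beta) = (0, Im mu)] and [(1, 0)]
   then give [Im mu = 0] and [Re mu <= 0]. *)

Lemma is_derive_value (f : R -> R) (x l l' : R) : is_derive f x l -> l = l' -> is_derive f x l'.
Proof. now intros H <-. Qed.

Lemma is_derive_Rplus (f g : R -> R) (x df dg : R) : is_derive f x df -> is_derive g x dg ->
  is_derive (fun t => f t + g t) x (df + dg).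
Proof. exact (is_derive_plus f g x df dg). Qed.

Lemma is_derive_Rminus (f g : R -> R) (x df dg : R) : is_derive f x df -> is_derive g x dg ->
  is_derive (fun t => f t - g t) x (df - dg).
Proof. exact (is_derive_minus f g x df dg). Qed.

Lemma is_derive_Ropp (f : R -> R) (x df : R) :
  is_derive f x df -> is_derive (fun t => - f t) x (- df).
Proof. exact (is_derive_opp f x df). Qed.

Lemma is_derive_Rmult (f g : R -> R) (x df dg : R) : is_derive f x df -> is_derive g x dg ->
  is_derive (fun t => f t * g t) x (df * g x + f x * dg).
Proof. intros Hf Hg. apply (is_derive_mult f g x df dg Hf Hg), Rmult_comm. Qed.

Lemma is_derive_Rsqr (f : R -> R) (x df : R) : is_derive f x df ->
  is_derive (fun t => f t ^ 2) x (2 * f x * df).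
Proof.
  intros H. apply (is_derive_ext (fun t => f t * f t)); [intros t; simpl; ring|].
  eapply is_derive_value; [apply is_derive_Rmult; eauto | ring].
Qed.

Lemma is_derive_Rconst (k x : R) : is_derive (fun _ : R => k) x 0.
Proof. exact (is_derive_const (K := R_AbsRing) k x). Qed.

Lemma is_derive_one_minus_id (x : R) : is_derive (fun t => 1 - t) x (-1).
Proof. auto_derive; [exact I | ring]. Qed.

Lemma is_derive_reflect (f : R -> R) (x df : R) : is_derive f (- x) df ->
  is_derive (fun t => f (- t)) x (- df).
Proof.
  intros H. eapply is_derive_value.
  - apply (is_derive_comp f Ropp x df (-1)); [exact H | auto_derive; [exact I | ring]].
  - change (-1 * df = - df). ring.
Qed.

Lemma is_derive_fst (f : R -> C) (x : R) (l : C) :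
  is_derive f x l -> is_derive (fun t => fst (f t)) x (fst l).
Proof.
  intros H. eapply filterdiff_ext_lin.
  - apply (filterdiff_comp _ _ _ _ H (filterdiff_linear _ is_linear_fst)).
  - reflexivity.
Qed.

Lemma is_derive_snd (f : R -> C) (x : R) (l : C) :
  is_derive f x l -> is_derive (fun t => snd (f t)) x (snd l).
Proof.
  intros H. eapply filterdiff_ext_lin.
  - apply (filterdiff_comp _ _ _ _ H (filterdiff_linear _ is_linear_snd)).
  - reflexivity.
Qed.

Lemma le_of_derive_nonneg (f df : R -> R) x y : x <= y ->
  (forall z, x <= z <= y -> is_derive f z (df z)) ->
  (forall z, x <= z <= y -> 0 <= df z) -> f x <= f y.
Proof.
  intros Hxy Hd Hpos.
  destruct (MVT_gen f x y df) as [c [Hc Heq]];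
    rewrite ?Rmin_left, ?Rmax_right in * by lra.
  - intros z Hz. apply Hd. lra.
  - intros z Hz. apply continuity_pt_filterlim.
    apply (ex_derive_continuous (K := R_AbsRing) (V := R_NormedModule)).
    exists (df z). apply Hd. lra.
  - pose proof (Hpos c Hc). nra.
Qed.

Lemma abs_sub_le_of_derive_abs_le (v dv G dG : R -> R) x y : x <= y ->
  (forall z, x <= z <= y -> is_derive v z (dv z)) ->
  (forall z, x <= z <= y -> is_derive G z (dG z)) ->
  (forall z, x <= z <= y -> Rabs (dv z) <= dG z) ->
  Rabs (v y - v x) <= G y - G x.
Proof.
  intros Hxy Hv HG Hb.
  assert (G x - v x <= G y - v y).
  { apply (le_of_derive_nonneg (fun z => G z - v z) (fun z => dG z - dv z)); auto.
    - intros z Hz. apply is_derive_Rminus; auto.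
    - intros z Hz. specialize (Hb z Hz). apply Rabs_le_between in Hb. lra. }
  assert (G x + v x <= G y + v y).
  { apply (le_of_derive_nonneg (fun z => G z + v z) (fun z => dG z + dv z)); auto.
    - intros z Hz. apply is_derive_Rplus; auto.
    - intros z Hz. specialize (Hb z Hz). apply Rabs_le_between in Hb. lra. }
  apply Rabs_le. lra.
Qed.

Lemma exp_le_exp x y : x <= y -> exp x <= exp y.
Proof. intros [H | ->]; [apply Rlt_le, exp_increasing, H | apply Rle_refl]. Qed.

Lemma exp_growth_le (f df : R -> R) K x y : x <= y ->
  (forall z, x <= z <= y -> is_derive f z (df z)) ->
  (forall z, x <= z <= y -> K * f z <= df z) ->
  f x * exp (K * (y - x)) <= f y.
Proof.
  intros Hxy Hd Hb.
  assert (H : f x * exp (- K * x) <= f y * exp (- K * y)).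
  { apply (le_of_derive_nonneg (fun z => f z * exp (- K * z))
             (fun z => df z * exp (- K * z) + f z * (- K * exp (- K * z)))); auto.
    - intros z Hz. apply (is_derive_Rmult f (fun t => exp (- K * t)));
        [auto | auto_derive; [exact I | ring]].
    - intros z Hz. specialize (Hb z Hz). pose proof (exp_pos (- K * z)). nra. }
  replace (f x * exp (K * (y - x))) with (f x * exp (- K * x) * exp (K * y))
    by (rewrite Rmult_assoc, <- exp_plus; do 2 f_equal; ring).
  replace (f y) with (f y * exp (- K * y) * exp (K * y))
    by (rewrite Rmult_assoc, <- exp_plus, (Rplus_comm (- K * y)), <- Ropp_mult_distr_l,
          Rplus_opp_r, exp_0; ring).
  apply Rmult_le_compat_r; [apply Rlt_le, exp_pos | exact H].
Qed.

Lemma eq_of_derive_zero (f df : R -> R) lo hi x y : lo < x < hi -> lo < y < hi ->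
  (forall z, lo < z < hi -> is_derive f z (df z) /\ df z = 0) -> f x = f y.
Proof.
  intros Hx Hy H.
  assert (Hle : forall s t, lo < s -> s <= t -> t < hi -> f s <= f t /\ - f s <= - f t).
  { intros s t Hs Hst Ht. split.
    - apply (le_of_derive_nonneg f df); auto; intros z Hz;
        destruct (H z ltac:(lra)) as [Hd E]; [exact Hd | rewrite E; lra].
    - apply (le_of_derive_nonneg (fun t => - f t) (fun t => - df t)); auto; intros z Hz;
        destruct (H z ltac:(lra)) as [Hd E]; [apply is_derive_Ropp, Hd | rewrite E; lra]. }
  destruct (Rle_or_lt x y) as [Hxy | Hyx].
  - destruct (Hle x y); lra.
  - destruct (Hle y x); lra.
Qed.

Lemma filterlim_0_iff {T : Type} {F : (T -> Prop) -> Prop} {FF : Filter F} (f : T -> R) :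
  filterlim f F (locally 0) <-> forall e, 0 < e -> F (fun t => Rabs (f t) < e).
Proof.
  assert (Hb : forall e x, ball 0 e x <-> Rabs x < e).
  { intros e x. change (Rabs (x - 0) < e <-> Rabs x < e). now rewrite Rminus_0_r. }
  rewrite filterlim_locally. split.
  - intros H e He. apply (filter_imp _ _ (fun t => proj1 (Hb _ _))), (H (mkposreal e He)).
  - intros H e. apply (filter_imp _ _ (fun t => proj2 (Hb _ _))), H, cond_pos.
Qed.

Lemma filterlim_Rplus_0 {T : Type} {F : (T -> Prop) -> Prop} {FF : Filter F} (f g : T -> R) :
  filterlim f F (locally 0) -> filterlim g F (locally 0) ->
  filterlim (fun t => f t + g t) F (locally 0).
Proof.
  rewrite !filterlim_0_iff. intros Hf Hg e He.
  apply (filter_imp (fun t => Rabs (f t) < e / 2 /\ Rabs (g t) < e / 2)).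
  - intros t [H1 H2]. pose proof (Rabs_triang (f t) (g t)). lra.
  - apply filter_and; [apply Hf | apply Hg]; lra.
Qed.

Lemma filterlim_bounded_mult_0 {T : Type} {F : (T -> Prop) -> Prop} {FF : Filter F}
  (v u : T -> R) (M : R) :
  F (fun t => Rabs (v t) <= M) -> filterlim u F (locally 0) ->
  filterlim (fun t => v t * u t) F (locally 0).
Proof.
  rewrite !filterlim_0_iff. intros Hv Hu e He.
  assert (HM : 0 < Rabs M + 1) by (pose proof (Rabs_pos M); lra).
  apply (filter_imp (fun t => Rabs (v t) <= M /\ Rabs (u t) < e / (Rabs M + 1))).
  - intros t [H1 H2]. rewrite Rabs_mult.
    apply (Rmult_lt_compat_r (Rabs M + 1)) in H2; [|lra].
    unfold Rdiv in H2. rewrite Rmult_assoc, Rinv_l, Rmult_1_r in H2 by lra.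
    pose proof (Rle_abs M). pose proof (Rabs_pos (u t)). pose proof (Rabs_pos (v t)). nra.
  - apply filter_and; [exact Hv | apply Hu, Rdiv_lt_0_compat; lra].
Qed.

Lemma filterlim_fst_0 {T : Type} {F : (T -> Prop) -> Prop} {FF : Filter F} (f : T -> C) :
  filterlim f F (locally (RtoC 0)) -> filterlim (fun t => fst (f t)) F (locally 0).
Proof.
  rewrite !filterlim_locally. intros H e.
  apply (filter_imp _ _ (fun t (Ht : ball (RtoC 0) e (f t)) => proj1 Ht)), H.
Qed.

Lemma filterlim_snd_0 {T : Type} {F : (T -> Prop) -> Prop} {FF : Filter F} (f : T -> C) :
  filterlim f F (locally (RtoC 0)) -> filterlim (fun t => snd (f t)) F (locally 0).
Proof.
  rewrite !filterlim_locally. intros H e.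
  apply (filter_imp _ _ (fun t (Ht : ball (RtoC 0) e (f t)) => proj2 Ht)), H.
Qed.

Lemma at_left_of_interval (P : R -> Prop) a b :
  a < b -> (forall z, a < z < b -> P z) -> at_left b P.
Proof.
  intros Hab H. exists (mkposreal (b - a) ltac:(lra)). intros z Hz Hzb.
  change (Rabs (z - b) < b - a) in Hz. apply Rabs_def2 in Hz. apply H. lra.
Qed.

Lemma at_right_of_interval (P : R -> Prop) a b :
  a < b -> (forall z, a < z < b -> P z) -> at_right a P.
Proof.
  intros Hab H. exists (mkposreal (b - a) ltac:(lra)). intros z Hz Hza.
  change (Rabs (z - a) < b - a) in Hz. apply Rabs_def2 in Hz. apply H. lra.
Qed.

Lemma interval_of_at_left (P : R -> Prop) b :
  at_left b P -> exists a, a < b /\ forall z, a < z < b -> P z.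
Proof.
  intros [d Hd]. exists (b - d). split; [pose proof (cond_pos d); lra|].
  intros z Hz. apply Hd; [|lra]. change (Rabs (z - b) < d). apply Rabs_def1; lra.
Qed.

Lemma interval_of_at_right (P : R -> Prop) a :
  at_right a P -> exists b, a < b /\ forall z, a < z < b -> P z.
Proof.
  intros [d Hd]. exists (a + d). split; [pose proof (cond_pos d); lra|].
  intros z Hz. apply Hd; [|lra]. change (Rabs (z - a) < d). apply Rabs_def1; lra.
Qed.

Lemma at_left_witness (P : R -> Prop) x b :
  x < b -> at_left b P -> exists z, x < z < b /\ P z.
Proof.
  intros Hx H. destruct (interval_of_at_left P b H) as [a [Ha HP]].
  exists ((Rmax a x + b) / 2). assert (Rmax a x < b) by (apply Rmax_lub_lt; lra).
  pose proof (Rmax_l a x). pose proof (Rmax_r a x). split; [lra | apply HP; lra].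
Qed.

Lemma at_right_witness (P : R -> Prop) a x :
  a < x -> at_right a P -> exists z, a < z < x /\ P z.
Proof.
  intros Hx H. destruct (interval_of_at_right P a H) as [b [Hb HP]].
  exists (a + (Rmin b x - a) / 2). assert (a < Rmin b x) by (apply Rmin_glb_lt; lra).
  pose proof (Rmin_l b x). pose proof (Rmin_r b x). split; [lra | apply HP; lra].
Qed.

Lemma eq0_of_nondecreasing_vanishing (f : R -> R) lo hi :
  (forall x y, lo < x -> x <= y -> y < hi -> f x <= f y) ->
  filterlim f (at_right lo) (locally 0) -> filterlim f (at_left hi) (locally 0) ->
  forall x, lo < x < hi -> f x = 0.
Proof.
  intros Hmono Hlo Hhi x Hx.
  specialize (proj1 (filterlim_0_iff f) Hlo) as Hlo'.
  specialize (proj1 (filterlim_0_iff f) Hhi) as Hhi'.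
  destruct (Rtotal_order (f x) 0) as [Hneg | [Hzero | Hpos]]; [exfalso | exact Hzero | exfalso].
  - destruct (at_right_witness _ lo x (proj1 Hx) (Hlo' (- f x) ltac:(lra))) as [z [Hz Hsmall]].
    pose proof (Hmono z x ltac:(lra) ltac:(lra) ltac:(lra)).
    apply Rabs_def2 in Hsmall. lra.
  - destruct (at_left_witness _ x hi (proj2 Hx) (Hhi' (f x) Hpos)) as [z [Hz Hsmall]].
    pose proof (Hmono x z ltac:(lra) ltac:(lra) ltac:(lra)).
    apply Rabs_def2 in Hsmall. lra.
Qed.

(** * The first-order system and its energy *)

(* [weight eps x = ((1 + x) / (1 - x)) ^ (eps / 2)] is the integrating factor of
   [Phi' + eps / (1 - x^2) Phi]. *)
Definition weight (eps x : R) : R := exp (eps / 2 * (ln (1 + x) - ln (1 - x))).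

Lemma weight_pos eps x : 0 < weight eps x.
Proof. apply exp_pos. Qed.

Lemma weight_0 x : weight 0 x = 1.
Proof. unfold weight. rewrite Rdiv_0_l, Rmult_0_l. apply exp_0. Qed.

Lemma is_derive_weight eps x : -1 < x < 1 ->
  is_derive (weight eps) x (weight eps x * eps / (1 - x ^ 2)).
Proof.
  intros Hx. unfold weight. auto_derive.
  - repeat split; lra.
  - unfold Rminus. field. split; nra.
Qed.

Lemma weight_le eps x y : 0 <= eps -> -1 < x -> x <= y -> y < 1 -> weight eps x <= weight eps y.
Proof.
  intros He Hx Hxy Hy.
  apply (le_of_derive_nonneg _ (fun z => weight eps z * eps / (1 - z ^ 2))); auto.
  - intros z Hz. apply is_derive_weight. lra.
  - intros z Hz. pose proof (weight_pos eps z).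
    apply Rmult_le_pos; [apply Rmult_le_pos; lra | apply Rlt_le, Rinv_0_lt_compat; nra].
Qed.

(* [u' = v / p] and [v' = mu p u / (1 - x^2)] for [mu = c + i b], [u = u1 + i u2],
   [v = v1 + i v2]. *)
Definition ode_at (c b : R) (p u1 u2 v1 v2 : R -> R) (x : R) : Prop :=
  is_derive u1 x (v1 x / p x) /\ is_derive u2 x (v2 x / p x) /\
  is_derive v1 x (p x / (1 - x ^ 2) * (c * u1 x - b * u2 x)) /\
  is_derive v2 x (p x / (1 - x ^ 2) * (c * u2 x + b * u1 x)).

Lemma ode_at_reflect c b p u1 u2 v1 v2 x :
  ode_at c b p u1 u2 v1 v2 (- x) ->
  ode_at c b (fun t => p (- t)) (fun t => u1 (- t)) (fun t => u2 (- t))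
    (fun t => - v1 (- t)) (fun t => - v2 (- t)) x.
Proof.
  intros (H1 & H2 & H3 & H4). refine (conj _ (conj _ (conj _ _))).
  - eapply is_derive_value; [apply is_derive_reflect, H1 | unfold Rdiv; ring].
  - eapply is_derive_value; [apply is_derive_reflect, H2 | unfold Rdiv; ring].
  - eapply is_derive_value; [apply is_derive_Ropp, is_derive_reflect, H3|].
    replace ((- x) ^ 2) with (x ^ 2) by ring. ring.
  - eapply is_derive_value; [apply is_derive_Ropp, is_derive_reflect, H4|].
    replace ((- x) ^ 2) with (x ^ 2) by ring. ring.
Qed.

Definition eventually_bounded (F : (R -> Prop) -> Prop) (f : R -> R) : Prop :=
  exists M, F (fun x => Rabs (f x) <= M).

Lemma eventually_bounded_lincomb {F : (R -> Prop) -> Prop} {FF : Filter F} (f g : R -> R) k l :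
  eventually_bounded F f -> eventually_bounded F g ->
  eventually_bounded F (fun x => k * f x + l * g x).
Proof.
  intros [M Hf] [N Hg]. exists (Rabs k * M + Rabs l * N).
  apply (filter_imp (fun x => Rabs (f x) <= M /\ Rabs (g x) <= N));
    [intros x [H1 H2] | now apply filter_and].
  eapply Rle_trans; [apply Rabs_triang|]. rewrite !Rabs_mult.
  apply Rplus_le_compat; apply Rmult_le_compat_l; auto using Rabs_pos.
Qed.

Lemma eventually_bounded_of_sq {F : (R -> Prop) -> Prop} {FF : Filter F} (f g : R -> R) M :
  F (fun x => f x ^ 2 + g x ^ 2 <= M) -> eventually_bounded F f /\ eventually_bounded F g.
Proof.
  intros H. split; exists (1 + M); refine (filter_imp _ _ _ H);
    intros x Hx; apply Rabs_le; split; nra.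
Qed.

(* [energy = alpha Re (v conj u) + beta Im (v conj u)] *)
Definition energy (alpha beta : R) (u1 u2 v1 v2 : R -> R) (x : R) : R :=
  alpha * (v1 x * u1 x + v2 x * u2 x) + beta * (v2 x * u1 x - v1 x * u2 x).

Lemma energy_vanishes {F : (R -> Prop) -> Prop} {FF : Filter F} alpha beta u1 u2 v1 v2 :
  filterlim u1 F (locally 0) -> filterlim u2 F (locally 0) ->
  eventually_bounded F v1 -> eventually_bounded F v2 ->
  filterlim (energy alpha beta u1 u2 v1 v2) F (locally 0).
Proof.
  intros Hu1 Hu2 Hv1 Hv2.
  apply (filterlim_ext (fun x => (alpha * v1 x + beta * v2 x) * u1 x
                               + (alpha * v2 x + - beta * v1 x) * u2 x));
    [intros x; unfold energy; ring|].
  apply filterlim_Rplus_0.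
  - destruct (eventually_bounded_lincomb v1 v2 alpha beta Hv1 Hv2) as [M HM].
    exact (filterlim_bounded_mult_0 _ _ M HM Hu1).
  - destruct (eventually_bounded_lincomb v2 v1 alpha (- beta) Hv2 Hv1) as [M HM].
    exact (filterlim_bounded_mult_0 _ _ M HM Hu2).
Qed.

Lemma is_derive_energy c b p u1 u2 v1 v2 alpha beta x :
  ode_at c b p u1 u2 v1 v2 x -> 0 < p x -> 0 < 1 - x ^ 2 ->
  is_derive (energy alpha beta u1 u2 v1 v2) x
    ((alpha * c + beta * b) * (p x / (1 - x ^ 2)) * (u1 x ^ 2 + u2 x ^ 2)
     + alpha * (v1 x ^ 2 + v2 x ^ 2) / p x).
Proof.
  intros (H1 & H2 & H3 & H4) Hp Hx. unfold energy. eapply is_derive_value.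
  - apply is_derive_Rplus; apply is_derive_scal;
      [apply is_derive_Rplus | apply is_derive_Rminus]; apply is_derive_Rmult; eauto.
  - field. lra.
Qed.

Lemma eq0_of_is_derive_on_zero (f : R -> R) lo hi x l : lo < x < hi ->
  (forall y, lo < y < hi -> f y = 0) -> is_derive f x l -> l = 0.
Proof.
  intros Hx Hf Hd.
  assert (H0 : is_derive (fun _ => 0) x l).
  { apply (is_derive_ext_loc f); auto.
    apply (locally_interval _ x lo hi); simpl; try lra. intros y H1 H2. apply Hf. lra. }
  apply is_derive_unique in H0. rewrite <- H0. apply is_derive_unique, is_derive_Rconst.
Qed.

Lemma ode_u_eq0 c b p u1 u2 v1 v2 alpha beta lo hi :
  -1 <= lo -> hi <= 1 -> 0 <= alpha -> 0 < alpha * c + beta * b ->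
  (forall x, lo < x < hi -> 0 < p x /\ ode_at c b p u1 u2 v1 v2 x) ->
  filterlim u1 (at_right lo) (locally 0) -> filterlim u2 (at_right lo) (locally 0) ->
  filterlim u1 (at_left hi) (locally 0) -> filterlim u2 (at_left hi) (locally 0) ->
  eventually_bounded (at_right lo) v1 -> eventually_bounded (at_right lo) v2 ->
  eventually_bounded (at_left hi) v1 -> eventually_bounded (at_left hi) v2 ->
  forall x, lo < x < hi -> u1 x = 0 /\ u2 x = 0.
Proof.
  intros Hlo Hhi Halpha Hk Hsys Hl1 Hl2 Hr1 Hr2 Bl1 Bl2 Br1 Br2.
  set (T := energy alpha beta u1 u2 v1 v2).
  set (dT := fun x => (alpha * c + beta * b) * (p x / (1 - x ^ 2)) * (u1 x ^ 2 + u2 x ^ 2)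
                      + alpha * (v1 x ^ 2 + v2 x ^ 2) / p x).
  assert (Hden : forall x, lo < x < hi -> 0 < 1 - x ^ 2) by (intros; nra).
  assert (HdT : forall x, lo < x < hi -> is_derive T x (dT x)).
  { intros x Hx. apply is_derive_energy; [apply Hsys | apply Hsys | apply Hden]; auto. }
  assert (Hterms : forall x, lo < x < hi ->
    0 <= (alpha * c + beta * b) * (p x / (1 - x ^ 2)) /\ 0 <= alpha * (v1 x ^ 2 + v2 x ^ 2) / p x).
  { intros x Hx. destruct (Hsys x Hx) as [Hp _]. pose proof (Hden x Hx). split.
    - apply Rmult_le_pos; [lra | apply Rlt_le, Rdiv_lt_0_compat; lra].
    - apply Rmult_le_pos; [apply Rmult_le_pos; nra | apply Rlt_le, Rinv_0_lt_compat; lra]. }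
  assert (HT0 : forall x, lo < x < hi -> T x = 0).
  { apply eq0_of_nondecreasing_vanishing;
      [| apply energy_vanishes; auto | apply energy_vanishes; auto].
    intros x y Hx Hxy Hy. apply (le_of_derive_nonneg T dT); auto; intros z Hz.
    - apply HdT. lra.
    - destruct (Hterms z ltac:(lra)). unfold dT. pose proof (pow2_ge_0 (u1 z)).
      pose proof (pow2_ge_0 (u2 z)). nra. }
  intros x Hx. pose proof (eq0_of_is_derive_on_zero T lo hi x (dT x) Hx HT0 (HdT x Hx)) as Z.
  destruct (Hterms x Hx). destruct (Hsys x Hx) as [Hp _]. pose proof (Hden x Hx).
  assert (0 < (alpha * c + beta * b) * (p x / (1 - x ^ 2)))
    by (apply Rmult_lt_0_compat; [lra | apply Rdiv_lt_0_compat; lra]).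
  unfold dT in Z. pose proof (pow2_ge_0 (u1 x)). pose proof (pow2_ge_0 (u2 x)).
  assert (u1 x ^ 2 + u2 x ^ 2 = 0) by nra. split; nra.
Qed.

(** * Boundedness of [v] at the endpoints *)

Lemma eventually_bounded_of_derive_dominated (v dv G dG : R -> R) a m : a < m ->
  (forall z, a < z <= m -> is_derive v z (dv z) /\ is_derive G z (dG z)) ->
  (forall z, a < z <= m -> Rabs (dv z) <= dG z /\ 0 <= G z) ->
  eventually_bounded (at_right a) v.
Proof.
  intros Ham Hd Hb. exists (Rabs (v m) + G m).
  apply (at_right_of_interval _ a m Ham). intros z Hz.
  assert (Rabs (v m - v z) <= G m - G z).
  { apply (abs_sub_le_of_derive_abs_le v dv G dG); try lra;
      intros w Hw; apply Hd || apply Hb; lra. }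
  pose proof (Rabs_triang_inv (v z) (v m)). rewrite Rabs_minus_sym in H.
  destruct (Hb z ltac:(lra)). lra.
Qed.

Lemma eventually_le_of_derive_le_linear (W dW : R -> R) K a b : a < b -> 0 <= K ->
  (forall z, a < z < b -> is_derive W z (dW z) /\ dW z <= K * W z /\ 0 <= W z) ->
  exists M, at_left b (fun z => W z <= M).
Proof.
  intros Hab HK H. set (m := (a + b) / 2).
  exists (W m * exp (K * (b - m))). apply (at_left_of_interval _ m b); [unfold m; lra|].
  intros z Hz.
  assert (Hg : - W m * exp (K * (z - m)) <= - W z).
  { apply (exp_growth_le (fun t => - W t) (fun t => - dW t)); try lra; intros w Hw;
      destruct (H w ltac:(unfold m in *; lra)) as (Hd & Hle & _);
      [apply is_derive_Ropp, Hd | lra]. }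
  assert (exp (K * (z - m)) <= exp (K * (b - m))) by (apply exp_le_exp; nra).
  destruct (H m ltac:(unfold m; lra)) as (_ & _ & Hm). nra.
Qed.

(* If [F' >= K F] then [F] stays positive once positive; while [F > 0], [Q' >= - L Q]
   keeps [Q] away from 0, which [Q <= G -> 0] forbids. *)
Lemma cone_exit (F dF Q dQ G : R -> R) K L a b : 0 <= L ->
  (forall z, a < z < b -> is_derive F z (dF z) /\ K * F z <= dF z) ->
  (forall z, a < z < b -> 0 < F z ->
     is_derive Q z (dQ z) /\ - L * Q z <= dQ z /\ 0 < Q z <= G z) ->
  filterlim G (at_left b) (locally 0) ->
  forall x, a < x < b -> F x <= 0.
Proof.
  intros HL HF HQ HG x Hx. apply Rnot_lt_le. intros HFx.
  assert (Hpos : forall z, x <= z < b -> 0 < F z).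
  { intros z Hz. assert (F x * exp (K * (z - x)) <= F z).
    { apply (exp_growth_le F dF); try lra; intros w Hw; apply HF; lra. }
    pose proof (exp_pos (K * (z - x))). nra. }
  destruct (HQ x Hx HFx) as (_ & _ & HQx & _).
  assert (Hlow : forall z, x <= z < b -> Q x * exp (- L * (b - x)) <= G z).
  { intros z Hz. assert (Q x * exp (- L * (z - x)) <= Q z).
    { apply (exp_growth_le Q dQ); try lra; intros w Hw;
        destruct (HQ w ltac:(lra) (Hpos w ltac:(lra))) as (? & ? & _); auto. }
    assert (exp (- L * (b - x)) <= exp (- L * (z - x))) by (apply exp_le_exp; nra).
    destruct (HQ z ltac:(lra) (Hpos z Hz)) as (_ & _ & _ & HQG). nra. }
  assert (Hsmall : 0 < Q x * exp (- L * (b - x))) by (pose proof (exp_pos (- L * (b - x))); nra).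
  destruct (at_left_witness _ x b (proj2 Hx) (proj1 (filterlim_0_iff G) HG _ Hsmall))
    as [z [Hz HGz]].
  pose proof (Hlow z ltac:(lra)). apply Rabs_def2 in HGz. lra.
Qed.

Lemma large_near_one k K : 0 < k -> exists a, 0 <= a < 1 /\ forall x, a < x < 1 -> K <= k / (1 - x).
Proof.
  intros Hk. set (d := k / (Rabs K + 1)).
  assert (Hd : d * (Rabs K + 1) = k) by (unfold d; field; pose proof (Rabs_pos K); lra).
  assert (0 < d) by (unfold d; apply Rdiv_lt_0_compat; pose proof (Rabs_pos K); lra).
  exists (Rmax 0 (1 - d)). split.
  - split; [apply Rmax_l | apply Rmax_lub_lt; lra].
  - intros x [Hx Hx1]. apply Rmax_Rlt in Hx as [Hx0 Hxd].
    apply (Rmult_le_reg_r (1 - x)); [lra|].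
    replace (k / (1 - x) * (1 - x)) with k by (field; lra).
    pose proof (Rle_abs K). pose proof (Rabs_pos K). nra.
Qed.

Lemma dot_bound y1 y2 z1 z2 :
  - ((y1 ^ 2 + y2 ^ 2) + (z1 ^ 2 + z2 ^ 2)) <= 2 * (y1 * z1 + y2 * z2)
  <= (y1 ^ 2 + y2 ^ 2) + (z1 ^ 2 + z2 ^ 2).
Proof.
  pose proof (pow2_ge_0 (y1 + z1)). pose proof (pow2_ge_0 (y2 + z2)).
  pose proof (pow2_ge_0 (y1 - z1)). pose proof (pow2_ge_0 (y2 - z2)). split; nra.
Qed.

Lemma cmul_sq_norm g1 g2 y1 y2 :
  (g1 * y1 - g2 * y2) ^ 2 + (g1 * y2 + g2 * y1) ^ 2 = (g1 ^ 2 + g2 ^ 2) * (y1 ^ 2 + y2 ^ 2).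
Proof. ring. Qed.

Lemma mult_abs_bound c Y : 0 <= Y -> - (Rabs c * Y) <= c * Y <= Rabs c * Y.
Proof.
  intros HY. pose proof (Rle_abs c). pose proof (Rle_abs (- c)). rewrite Rabs_Ropp in *.
  split; nra.
Qed.

Lemma filterlim_sq_sum_0 {F : (R -> Prop) -> Prop} {FF : Filter F} (u1 u2 : R -> R) :
  filterlim u1 F (locally 0) -> filterlim u2 F (locally 0) ->
  filterlim (fun x => u1 x ^ 2 + u2 x ^ 2) F (locally 0).
Proof.
  intros H1 H2.
  assert (Hsq : forall u, filterlim u F (locally 0) -> filterlim (fun x => u x ^ 2) F (locally 0)).
  { intros u Hu. apply (filterlim_ext (fun x => u x * u x)); [intros x; ring|].
    apply (filterlim_bounded_mult_0 u u 1); [|exact Hu].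
    apply (filter_imp _ _ (fun x => @Rlt_le _ _)), (proj1 (filterlim_0_iff u) Hu); lra. }
  apply filterlim_Rplus_0; auto.
Qed.

Section RightEndPositiveEps.

Variables (eps c b a : R) (p u1 u2 v1 v2 : R -> R).
Hypothesis Heps : 0 < eps.
Hypothesis Ha : 0 <= a < 1.
Hypothesis Hsys : forall x, a < x < 1 ->
  0 < p x /\ is_derive p x (p x * eps / (1 - x ^ 2)) /\ ode_at c b p u1 u2 v1 v2 x.
Hypothesis Hu1 : filterlim u1 (at_left 1) (locally 0).
Hypothesis Hu2 : filterlim u2 (at_left 1) (locally 0).

(* With [mu' = mu / eps], [y = p u] and [Z = v - mu' y] solve [y' = e y + v] and
   [Z' = - mu' v], where [e = eps / (1 - x^2)] blows up at [1]. *)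
Let c' := c / eps.
Let b' := b / eps.
Let n := c' ^ 2 + b' ^ 2.
Let e x := eps / (1 - x ^ 2).
Let y1 x := p x * u1 x.
Let y2 x := p x * u2 x.
Let Z1 x := v1 x - (c' * y1 x - b' * y2 x).
Let Z2 x := v2 x - (c' * y2 x + b' * y1 x).
Let Y x := y1 x ^ 2 + y2 x ^ 2.
Let W x := Z1 x ^ 2 + Z2 x ^ 2.
Let dY x := 2 * y1 x * (e x * y1 x + v1 x) + 2 * y2 x * (e x * y2 x + v2 x).
Let dW x := 2 * Z1 x * (- (c' * v1 x - b' * v2 x)) + 2 * Z2 x * (- (c' * v2 x + b' * v1 x)).

Lemma is_derive_Y_W_pos x : a < x < 1 -> is_derive Y x (dY x) /\ is_derive W x (dW x).
Proof.
  intros Hx. destruct (Hsys x Hx) as (Hp & Hdp & Hu1' & Hu2' & Hv1' & Hv2').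
  assert (Hden : 0 < 1 - x ^ 2) by nra.
  assert (Hy1 : is_derive y1 x (e x * y1 x + v1 x)).
  { eapply is_derive_value; [apply (is_derive_Rmult p u1); eauto | unfold e, y1; field; lra]. }
  assert (Hy2 : is_derive y2 x (e x * y2 x + v2 x)).
  { eapply is_derive_value; [apply (is_derive_Rmult p u2); eauto | unfold e, y2; field; lra]. }
  split; apply is_derive_Rplus; apply is_derive_Rsqr; auto.
  - eapply is_derive_value.
    + apply is_derive_Rminus; [eauto | apply is_derive_Rminus; apply is_derive_scal; eauto].
    + unfold c', b', e, y1, y2. field. lra.
  - eapply is_derive_value.
    + apply is_derive_Rminus; [eauto | apply is_derive_Rplus; apply is_derive_scal; eauto].
    + unfold c', b', e, y1, y2. field. lra.
Qed.

Let K := 2 + 2 * Rabs c' + n ^ 2.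

Lemma Y_W_growth_pos x : K <= e x -> K * (Y x - W x) <= dY x - dW x.
Proof.
  intros HK.
  assert (EY : dY x = 2 * e x * Y x + 2 * (y1 x * Z1 x + y2 x * Z2 x) + 2 * c' * Y x)
    by (unfold dY, Y, Z1, Z2; ring).
  set (g1 := c' ^ 2 - b' ^ 2). set (g2 := 2 * c' * b').
  assert (EW : dW x = - 2 * c' * W x
                      - 2 * (Z1 x * (g1 * y1 x - g2 * y2 x) + Z2 x * (g1 * y2 x + g2 * y1 x)))
    by (unfold dW, W, Z1, Z2, g1, g2; ring).
  pose proof (dot_bound (y1 x) (y2 x) (Z1 x) (Z2 x)).
  pose proof (dot_bound (Z1 x) (Z2 x) (g1 * y1 x - g2 * y2 x) (g1 * y2 x + g2 * y1 x)).
  rewrite cmul_sq_norm in H0.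
  replace (g1 ^ 2 + g2 ^ 2) with (n ^ 2) in H0 by (unfold n, g1, g2; ring).
  assert (HY : 0 <= Y x) by (unfold Y; nra). assert (HW : 0 <= W x) by (unfold W; nra).
  pose proof (mult_abs_bound c' _ HY). pose proof (mult_abs_bound c' _ HW).
  assert (K * Y x <= e x * Y x) by nra. pose proof (Rabs_pos c'). pose proof (pow2_ge_0 n).
  fold (Y x) (W x) in *. unfold K in *. nra.
Qed.

Let L := 2 + 2 * Rabs c'.
Let Q x := u1 x ^ 2 + u2 x ^ 2.
Let dQ x := 2 * u1 x * (v1 x / p x) + 2 * u2 x * (v2 x / p x).

Lemma u_decay_pos x : a < x < 1 -> W x < Y x ->
  is_derive Q x (dQ x) /\ - L * Q x <= dQ x /\ 0 < Q x.
Proof.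
  intros Hx HWY. destruct (Hsys x Hx) as (Hp & _ & Hu1' & Hu2' & _).
  assert (EQ : Q x * p x ^ 2 = Y x) by (unfold Q, Y, y1, y2; ring).
  assert (EdQ : dQ x * p x ^ 2 = 2 * (y1 x * Z1 x + y2 x * Z2 x) + 2 * c' * Y x)
    by (unfold dQ, Y, Z1, Z2, y1, y2; field; lra).
  assert (HW : 0 <= W x) by (unfold W; nra).
  pose proof (dot_bound (y1 x) (y2 x) (Z1 x) (Z2 x)).
  pose proof (mult_abs_bound c' (Y x) ltac:(lra)).
  assert (Hp2 : 0 < p x ^ 2) by nra.
  refine (conj _ (conj _ _)).
  - apply is_derive_Rplus; apply is_derive_Rsqr; auto.
  - apply (Rmult_le_reg_r (p x ^ 2)); [exact Hp2|].
    rewrite Rmult_assoc, EQ, EdQ. fold (Y x) (W x) in *. unfold L. lra.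
  - apply (Rmult_lt_reg_r (p x ^ 2)); [exact Hp2|]. rewrite EQ. lra.
Qed.

Lemma W_growth_pos x : Y x <= W x -> dW x <= K * W x.
Proof.
  intros HYW. set (g1 := c' ^ 2 - b' ^ 2). set (g2 := 2 * c' * b').
  assert (EW : dW x = - 2 * c' * W x
                      - 2 * (Z1 x * (g1 * y1 x - g2 * y2 x) + Z2 x * (g1 * y2 x + g2 * y1 x)))
    by (unfold dW, W, Z1, Z2, g1, g2; ring).
  pose proof (dot_bound (Z1 x) (Z2 x) (g1 * y1 x - g2 * y2 x) (g1 * y2 x + g2 * y1 x)).
  rewrite cmul_sq_norm in H.
  replace (g1 ^ 2 + g2 ^ 2) with (n ^ 2) in H by (unfold n, g1, g2; ring).
  assert (HY : 0 <= Y x) by (unfold Y; nra). assert (HW : 0 <= W x) by (unfold W; nra).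
  pose proof (mult_abs_bound c' _ HW). pose proof (pow2_ge_0 n).
  fold (Y x) (W x) in *. unfold K. nra.
Qed.

Lemma v_sq_le_pos x : Y x <= W x -> v1 x ^ 2 + v2 x ^ 2 <= (2 + 2 * n) * W x.
Proof.
  intros HYW.
  assert (E : v1 x ^ 2 + v2 x ^ 2 = W x + n * Y x
      + 2 * (Z1 x * (c' * y1 x - b' * y2 x) + Z2 x * (c' * y2 x + b' * y1 x)))
    by (unfold W, Z1, Z2, Y, n; ring).
  pose proof (dot_bound (Z1 x) (Z2 x) (c' * y1 x - b' * y2 x) (c' * y2 x + b' * y1 x)).
  rewrite cmul_sq_norm in H. change (c' ^ 2 + b' ^ 2) with n in H.
  assert (0 <= n) by (unfold n; nra).
  assert (n * Y x <= n * W x) by (apply Rmult_le_compat_l; auto).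
  fold (Y x) (W x) in *. lra.
Qed.

Lemma ode_v_bounded_at_one_pos :
  eventually_bounded (at_left 1) v1 /\ eventually_bounded (at_left 1) v2.
Proof.
  destruct (large_near_one (eps / 2) K) as [a0 [Ha0 Hlarge]]; [lra|].
  set (a1 := Rmax a a0).
  assert (Ha1 : a1 < 1) by (apply Rmax_lub_lt; lra).
  assert (Hnear : forall x, a1 < x < 1 -> a < x < 1 /\ K <= e x).
  { intros x [Hx Hx1]. apply Rmax_Rlt in Hx as [Hxa Hxa0]. split; [lra|].
    eapply Rle_trans; [apply (Hlarge x); lra|]. unfold e, Rdiv.
    rewrite Rmult_assoc, <- Rinv_mult. apply Rmult_le_compat_l; [lra|].
    apply Rinv_le_contravar; nra. }
  assert (HK : 0 <= K) by (unfold K; pose proof (Rabs_pos c'); pose proof (pow2_ge_0 n); lra).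
  assert (Hcone : forall x, a1 < x < 1 -> Y x - W x <= 0).
  { apply (cone_exit _ (fun x => dY x - dW x) Q dQ Q K L).
    - unfold L. pose proof (Rabs_pos c'). lra.
    - intros z Hz. destruct (Hnear z Hz) as [Hz' Hez]. split; [|apply Y_W_growth_pos; auto].
      destruct (is_derive_Y_W_pos z Hz'). apply is_derive_Rminus; auto.
    - intros z Hz HF. destruct (u_decay_pos z) as (HdQ & HQ & HQ0); [apply Hnear; auto | lra |].
      refine (conj HdQ (conj HQ (conj HQ0 (Rle_refl _)))).
    - apply filterlim_sq_sum_0; auto. }
  destruct (eventually_le_of_derive_le_linear W dW K a1 1) as [M HM]; auto.
  { intros z Hz. split; [apply is_derive_Y_W_pos, Hnear, Hz|].
    split; [apply W_growth_pos; pose proof (Hcone z Hz); lra | unfold W; nra]. }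
  apply (eventually_bounded_of_sq v1 v2 ((2 + 2 * n) * M)).
  apply (filter_imp (fun x => W x <= M /\ a1 < x < 1)).
  - intros x [HWx Hx]. eapply Rle_trans; [apply v_sq_le_pos; pose proof (Hcone x Hx); lra|].
    apply Rmult_le_compat_l; [unfold n; nra | exact HWx].
  - apply filter_and; [exact HM | apply (at_left_of_interval _ a1 1 Ha1); auto].
Qed.

End RightEndPositiveEps.

Section RightEndZeroEps.

Variables (c b a : R) (u1 u2 v1 v2 : R -> R).
Hypothesis Ha : 0 <= a < 1.
Hypothesis Hsys : forall x, a < x < 1 -> ode_at c b (fun _ => 1) u1 u2 v1 v2 x.
Hypothesis Hu1 : filterlim u1 (at_left 1) (locally 0).
Hypothesis Hu2 : filterlim u2 (at_left 1) (locally 0).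

(* [w = u / (1 - x)] and [y = w + v] solve [y' = y / (1 - x) + mu w / (1 + x)] and
   [v' = mu w / (1 + x)]. *)
Let n := c ^ 2 + b ^ 2.
Let w1 x := u1 x / (1 - x).
Let w2 x := u2 x / (1 - x).
Let y1 x := w1 x + v1 x.
Let y2 x := w2 x + v2 x.
Let Y x := y1 x ^ 2 + y2 x ^ 2.
Let W x := v1 x ^ 2 + v2 x ^ 2.
Let A x := y1 x * (c * w1 x - b * w2 x) + y2 x * (c * w2 x + b * w1 x).
Let B x := v1 x * (c * w1 x - b * w2 x) + v2 x * (c * w2 x + b * w1 x).
Let dY x := 2 * Y x / (1 - x) + 2 / (1 + x) * A x.
Let dW x := 2 / (1 + x) * B x.

Lemma is_derive_Y_W_zero x : a < x < 1 -> is_derive Y x (dY x) /\ is_derive W x (dW x).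
Proof.
  intros Hx. destruct (Hsys x Hx) as (Hu1' & Hu2' & Hv1' & Hv2').
  replace (1 - x ^ 2) with ((1 - x) * (1 + x)) in Hv1', Hv2' by ring.
  assert (Hinv : is_derive (fun t => / (1 - t)) x (- (-1) / (1 - x) ^ 2))
    by (apply is_derive_inv; [apply is_derive_one_minus_id | lra]).
  assert (Hy1 : is_derive y1 x (y1 x / (1 - x) + (c * w1 x - b * w2 x) / (1 + x))).
  { eapply is_derive_value; [apply is_derive_Rplus; [apply is_derive_Rmult; eauto | eauto]|].
    unfold y1, w1, w2. field; repeat split; lra. }
  assert (Hy2 : is_derive y2 x (y2 x / (1 - x) + (c * w2 x + b * w1 x) / (1 + x))).
  { eapply is_derive_value; [apply is_derive_Rplus; [apply is_derive_Rmult; eauto | eauto]|].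
    unfold y2, w1, w2. field; repeat split; lra. }
  split; (eapply is_derive_value; [apply is_derive_Rplus; apply is_derive_Rsqr; eauto|]).
  - unfold dY, Y, A. field; repeat split; lra.
  - unfold dW, B, w1, w2. field; repeat split; lra.
Qed.

Lemma A_bound_zero x : - ((2 * Rabs c + 1) * Y x + n * W x) <= 2 * A x
                  <= (2 * Rabs c + 1) * Y x + n * W x.
Proof.
  assert (E : A x = c * Y x - (y1 x * (c * v1 x - b * v2 x) + y2 x * (c * v2 x + b * v1 x)))
    by (unfold A, Y, y1, y2; ring).
  pose proof (dot_bound (y1 x) (y2 x) (c * v1 x - b * v2 x) (c * v2 x + b * v1 x)).
  rewrite cmul_sq_norm in H. change (c ^ 2 + b ^ 2) with n in H.
  assert (HY : 0 <= Y x) by (unfold Y; nra).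
  pose proof (mult_abs_bound c _ HY). fold (Y x) (W x) in *. rewrite E. lra.
Qed.

Lemma B_bound_zero x : - ((2 * Rabs c + 1) * W x + n * Y x) <= 2 * B x
                  <= (2 * Rabs c + 1) * W x + n * Y x.
Proof.
  assert (E : B x = (v1 x * (c * y1 x - b * y2 x) + v2 x * (c * y2 x + b * y1 x)) - c * W x)
    by (unfold B, W, y1, y2; ring).
  pose proof (dot_bound (v1 x) (v2 x) (c * y1 x - b * y2 x) (c * y2 x + b * y1 x)).
  rewrite cmul_sq_norm in H. change (c ^ 2 + b ^ 2) with n in H.
  assert (HW : 0 <= W x) by (unfold W; nra).
  pose proof (mult_abs_bound c _ HW). fold (Y x) (W x) in *. rewrite E. lra.
Qed.

Let K := n + 4 + 8 * Rabs c.

Lemma Y_W_growth_zero x : 0 <= x < 1 -> K + 2 * Rabs c + 1 + 4 * n <= 2 / (1 - x) ->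
  K * (Y x - 4 * W x) <= dY x - 4 * dW x.
Proof.
  intros Hx HK. pose proof (A_bound_zero x). pose proof (B_bound_zero x).
  assert (HY : 0 <= Y x) by (unfold Y; nra). assert (HW : 0 <= W x) by (unfold W; nra).
  assert (Hg : 0 < 2 / (1 + x) <= 2) by (split; [apply Rdiv_lt_0_compat | apply Rle_div_l]; lra).
  assert (E : dY x - 4 * dW x = 2 / (1 - x) * Y x + 2 / (1 + x) * (A x - 4 * B x))
    by (unfold dY, dW; field; lra).
  set (S := (2 * Rabs c + 1) * Y x + n * W x + 4 * ((2 * Rabs c + 1) * W x + n * Y x)).
  assert (Hn : 0 <= n) by (unfold n; nra). pose proof (Rabs_pos c).
  assert (HS : 0 <= S) by (unfold S; nra).
  assert (- S <= 2 / (1 + x) * (A x - 4 * B x)).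
  { assert (- S <= 2 * (A x - 4 * B x)) by (unfold S; lra). nra. }
  assert ((K + 2 * Rabs c + 1 + 4 * n) * Y x <= 2 / (1 - x) * Y x) by nra.
  unfold S, K in *. nra.
Qed.

Let L := 2 * Rabs c + 1 + n.
Let Q x := (1 - x) ^ 2 * Y x.
Let dQ x := 2 * (1 - x) * (-1) * Y x + (1 - x) ^ 2 * dY x.

Lemma u_decay_zero x : a < x < 1 -> 4 * W x < Y x ->
  is_derive Q x (dQ x) /\ - L * Q x <= dQ x /\ 0 < Q x <= 4 * (u1 x ^ 2 + u2 x ^ 2).
Proof.
  intros Hx HWY. pose proof (A_bound_zero x).
  assert (HW : 0 <= W x) by (unfold W; nra).
  assert (Hx2 : 0 < (1 - x) ^ 2) by (apply pow_lt; lra).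
  assert (Hg : 0 < 2 / (1 + x) <= 2) by (split; [apply Rdiv_lt_0_compat | apply Rle_div_l]; lra).
  assert (EdQ : dQ x = (1 - x) ^ 2 * (2 / (1 + x) * A x)) by (unfold dQ, dY; field; lra).
  refine (conj _ (conj _ (conj _ _))).
  - apply (is_derive_Rmult (fun t => (1 - t) ^ 2) Y).
    + apply is_derive_Rsqr, is_derive_one_minus_id.
    + apply is_derive_Y_W_zero, Hx.
  - rewrite EdQ. unfold Q.
    assert (- (L * Y x) <= 2 / (1 + x) * A x).
    { assert (n * W x <= n * Y x) by (apply Rmult_le_compat_l; unfold n; nra).
      assert (- (L * Y x) <= 2 * A x) by (unfold L; lra).
      assert (0 <= L * Y x) by (unfold L; pose proof (Rabs_pos c); unfold n; nra). nra. }
    nra.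
  - unfold Q. nra.
  - pose proof (dot_bound (y1 x) (y2 x) (2 * v1 x) (2 * v2 x)).
    assert (E : u1 x ^ 2 + u2 x ^ 2 = (1 - x) ^ 2 * ((y1 x - v1 x) ^ 2 + (y2 x - v2 x) ^ 2))
      by (unfold y1, y2, w1, w2; field; lra).
    rewrite E. unfold Q. fold (Y x) (W x) in *. unfold W, Y in *. nra.
Qed.

Lemma W_growth_zero x : a < x < 1 -> Y x <= 4 * W x -> dW x <= (2 * Rabs c + 1 + 4 * n) * W x.
Proof.
  intros Hx HYW. pose proof (B_bound_zero x).
  assert (HW : 0 <= W x) by (unfold W; nra).
  assert (n * Y x <= n * (4 * W x)) by (apply Rmult_le_compat_l; unfold n; nra).
  assert (H2 : 2 * B x <= (2 * Rabs c + 1 + 4 * n) * W x) by lra.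
  assert (0 <= (2 * Rabs c + 1 + 4 * n) * W x) by (pose proof (Rabs_pos c); unfold n in *; nra).
  unfold dW. replace (2 / (1 + x) * B x) with (/ (1 + x) * (2 * B x)) by (field; lra).
  assert (0 < / (1 + x) <= 1)
    by (split; [apply Rinv_0_lt_compat | rewrite <- Rinv_1; apply Rinv_le_contravar]; lra).
  nra.
Qed.

Lemma ode_v_bounded_at_one_zero :
  eventually_bounded (at_left 1) v1 /\ eventually_bounded (at_left 1) v2.
Proof.
  destruct (large_near_one 2 (K + 2 * Rabs c + 1 + 4 * n)) as [a0 [Ha0 Hlarge]]; [lra|].
  set (a1 := Rmax a a0).
  assert (Ha1 : a1 < 1) by (apply Rmax_lub_lt; lra).
  assert (Hnear : forall x, a1 < x < 1 -> a < x < 1 /\ a0 < x < 1).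
  { intros x [Hx Hx1]. apply Rmax_Rlt in Hx as [Hxa Hxa0]. lra. }
  assert (Hcone : forall x, a1 < x < 1 -> Y x - 4 * W x <= 0).
  { apply (cone_exit _ (fun x => dY x - 4 * dW x) Q dQ (fun x => 4 * (u1 x ^ 2 + u2 x ^ 2)) K L).
    - unfold L, n. pose proof (Rabs_pos c). nra.
    - intros z Hz. destruct (Hnear z Hz) as [Hz' Hz0]. split.
      + destruct (is_derive_Y_W_zero z Hz'). apply is_derive_Rminus, is_derive_scal; auto.
      + apply Y_W_growth_zero; [lra | apply Hlarge; auto].
    - intros z Hz HF. apply u_decay_zero; [apply Hnear; auto | lra].
    - apply (filterlim_bounded_mult_0 (fun _ => 4) _ 4).
      { apply filter_forall. intros. rewrite Rabs_pos_eq; lra. }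
      apply filterlim_sq_sum_0; auto. }
  destruct (eventually_le_of_derive_le_linear W dW (2 * Rabs c + 1 + 4 * n) a1 1) as [M HM]; auto.
  { pose proof (Rabs_pos c). unfold n. nra. }
  { intros z Hz. destruct (Hnear z Hz) as [Hz' _]. split; [apply is_derive_Y_W_zero, Hz'|].
    split; [apply W_growth_zero; [auto | pose proof (Hcone z Hz); lra] | unfold W; nra]. }
  exact (eventually_bounded_of_sq v1 v2 M HM).
Qed.

End RightEndZeroEps.

Lemma abs_scal_lincomb_le k c b s t : 0 <= k -> Rabs s <= 1 -> Rabs t <= 1 ->
  Rabs (k * (c * s + b * t)) <= k * (Rabs c + Rabs b).
Proof.
  intros Hk Hs Ht. rewrite Rabs_mult, (Rabs_pos_eq k Hk). apply Rmult_le_compat_l; [exact Hk|].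
  eapply Rle_trans; [apply Rabs_triang|]. rewrite !Rabs_mult.
  pose proof (Rabs_pos c). pose proof (Rabs_pos b). nra.
Qed.

Lemma ode_v_bounded_of_dominated c b p u1 u2 v1 v2 (G dG : R -> R) lo m : lo < m ->
  (forall z, lo < z <= m -> ode_at c b p u1 u2 v1 v2 z /\ is_derive G z (dG z) /\ 0 <= G z) ->
  (forall z, lo < z <= m ->
     0 <= p z / (1 - z ^ 2) /\ p z / (1 - z ^ 2) * (Rabs c + Rabs b) <= dG z) ->
  filterlim u1 (at_right lo) (locally 0) -> filterlim u2 (at_right lo) (locally 0) ->
  eventually_bounded (at_right lo) v1 /\ eventually_bounded (at_right lo) v2.
Proof.
  intros Hlm Hsys Hcoef Hu1 Hu2.
  destruct (interval_of_at_right _ lo (filter_and _ _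
    (proj1 (filterlim_0_iff u1) Hu1 1 Rlt_0_1) (proj1 (filterlim_0_iff u2) Hu2 1 Rlt_0_1)))
    as [m' [Hm' Hsmall]].
  set (m'' := Rmin m ((lo + m') / 2)).
  assert (Hm'' : lo < m'' <= m /\ m'' < m')
    by (unfold m''; pose proof (Rmin_l m ((lo + m') / 2)); pose proof (Rmin_r m ((lo + m') / 2));
        split; [split; [apply Rmin_glb_lt|]|]; lra).
  assert (Hbound : forall z s t, lo < z <= m'' -> Rabs s < 1 -> Rabs t < 1 ->
            Rabs (p z / (1 - z ^ 2) * (c * s + b * t)) <= dG z).
  { intros z s t Hz Hs Ht. destruct (Hcoef z ltac:(lra)) as [Hk HdG].
    eapply Rle_trans; [apply abs_scal_lincomb_le; lra | exact HdG]. }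
  split.
  - apply (eventually_bounded_of_derive_dominated v1
             (fun z => p z / (1 - z ^ 2) * (c * u1 z - b * u2 z)) G dG lo m''); try lra;
      intros z Hz; destruct (Hsys z ltac:(lra)) as ((_ & _ & Hv1 & _) & HG & HG0); auto.
    destruct (Hsmall z ltac:(lra)) as [Hs1 Hs2]. split; [|exact HG0].
    replace (c * u1 z - b * u2 z) with (c * u1 z + b * (- u2 z)) by ring.
    apply Hbound; [lra | exact Hs1 | now rewrite Rabs_Ropp].
  - apply (eventually_bounded_of_derive_dominated v2
             (fun z => p z / (1 - z ^ 2) * (c * u2 z + b * u1 z)) G dG lo m''); try lra;
      intros z Hz; destruct (Hsys z ltac:(lra)) as ((_ & _ & _ & Hv2) & HG & HG0); auto.
    destruct (Hsmall z ltac:(lra)) as [Hs1 Hs2].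
    split; [apply Hbound; [lra | exact Hs2 | exact Hs1] | exact HG0].
Qed.

Lemma ode_v_bounded_of_coeff_bounded c b p u1 u2 v1 v2 lo m Q : lo < m ->
  (forall z, lo < z <= m -> ode_at c b p u1 u2 v1 v2 z /\ 0 <= p z / (1 - z ^ 2) <= Q) ->
  filterlim u1 (at_right lo) (locally 0) -> filterlim u2 (at_right lo) (locally 0) ->
  eventually_bounded (at_right lo) v1 /\ eventually_bounded (at_right lo) v2.
Proof.
  intros Hlm Hsys. set (k := Q * (Rabs c + Rabs b)).
  apply (ode_v_bounded_of_dominated c b p u1 u2 v1 v2 (fun t => k * (t - lo)) (fun _ => k) lo m);
    [exact Hlm | |].
  - intros z Hz. destruct (Hsys z Hz) as [Hode [HQ0 HQ]].
    assert (0 <= k) by (unfold k; pose proof (Rabs_pos c); pose proof (Rabs_pos b); nra).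
    split; [exact Hode | split; [|nra]].
    auto_derive; [exact I | ring].
  - intros z Hz. destruct (Hsys z Hz) as [_ [HQ0 HQ]]. split; [exact HQ0|].
    apply Rmult_le_compat_r; [pose proof (Rabs_pos c); pose proof (Rabs_pos b); lra | exact HQ].
Qed.

Lemma weight_coeff_le eps x0 z : 0 <= eps -> x0 < 1 -> - x0 < z < x0 ->
  0 <= weight eps z / (1 - z ^ 2) <= weight eps x0 / (1 - x0 ^ 2).
Proof.
  intros Heps Hx0 Hz. pose proof (weight_pos eps z).
  assert (weight eps z <= weight eps x0) by (apply weight_le; lra).
  split; [apply Rlt_le, Rdiv_lt_0_compat; nra|].
  unfold Rdiv. apply Rmult_le_compat; [lra | apply Rlt_le, Rinv_0_lt_compat; nra | lra |].
  apply Rinv_le_contravar; nra.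
Qed.

Lemma filterlim_reflect_at_right (f : R -> R) x :
  filterlim f (at_right x) (locally 0) -> filterlim (fun t => f (- t)) (at_left (- x)) (locally 0).
Proof.
  intros H. apply (filterlim_comp _ _ _ Ropp f _ (at_right x)); [|exact H].
  rewrite <- (Ropp_involutive x) at 2. apply filterlim_Ropp_left.
Qed.

Lemma filterlim_reflect_at_left (f : R -> R) x :
  filterlim f (at_left x) (locally 0) -> filterlim (fun t => f (- t)) (at_right (- x)) (locally 0).
Proof.
  intros H. apply (filterlim_comp _ _ _ Ropp f _ (at_left x)); [|exact H].
  rewrite <- (Ropp_involutive x) at 2. apply filterlim_Ropp_right.
Qed.

Lemma eventually_bounded_reflect_at_left (v : R -> R) x :
  eventually_bounded (at_right (- x)) (fun t => - v (- t)) -> eventually_bounded (at_left x) v.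
Proof.
  intros [M HM]. exists M. apply (filterlim_Ropp_left x) in HM.
  apply (filter_imp (fun t => Rabs (- v (- - t)) <= M)); [|exact HM].
  intros t Ht. now rewrite Ropp_involutive, Rabs_Ropp in Ht.
Qed.

Lemma eventually_bounded_reflect_at_right (v : R -> R) x :
  eventually_bounded (at_left (- x)) (fun t => - v (- t)) -> eventually_bounded (at_right x) v.
Proof.
  intros [M HM]. exists M. apply (filterlim_Ropp_right x) in HM.
  apply (filter_imp (fun t => Rabs (- v (- - t)) <= M)); [|exact HM].
  intros t Ht. now rewrite Ropp_involutive, Rabs_Ropp in Ht.
Qed.

Lemma ode_at_weight_0 c b u1 u2 v1 v2 x :
  ode_at c b (weight 0) u1 u2 v1 v2 x -> ode_at c b (fun _ => 1) u1 u2 v1 v2 x.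
Proof. unfold ode_at. now rewrite !weight_0. Qed.

Lemma ode_v_bounded_at_left_end x0 eps c b u1 u2 v1 v2 : 0 < x0 <= 1 -> 0 <= eps ->
  (forall x, - x0 < x < x0 -> ode_at c b (weight eps) u1 u2 v1 v2 x) ->
  filterlim u1 (at_right (- x0)) (locally 0) -> filterlim u2 (at_right (- x0)) (locally 0) ->
  eventually_bounded (at_right (- x0)) v1 /\ eventually_bounded (at_right (- x0)) v2.
Proof.
  intros Hx0 Heps Hsys Hu1 Hu2. destruct (Rlt_or_le x0 1) as [Hlt | Hge].
  - apply (ode_v_bounded_of_coeff_bounded c b (weight eps) u1 u2 v1 v2 (- x0) 0
             (weight eps x0 / (1 - x0 ^ 2))); auto; [lra|].
    intros z Hz. split; [apply Hsys; lra | apply weight_coeff_le; lra].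
  - assert (x0 = 1) by lra. subst x0. destruct (Rle_lt_or_eq_dec 0 eps Heps) as [Hpos | <-].
    + set (k := (Rabs c + Rabs b) / eps).
      assert (Hk : 0 <= k) by (unfold k; pose proof (Rabs_pos c); pose proof (Rabs_pos b);
                               apply Rdiv_le_0_compat; lra).
      apply (ode_v_bounded_of_dominated c b (weight eps) u1 u2 v1 v2 (fun t => k * weight eps t)
               (fun t => k * (weight eps t * eps / (1 - t ^ 2))) (-1) 0); auto; [lra | |];
        intros z Hz; pose proof (weight_pos eps z); assert (0 < 1 - z ^ 2) by nra.
      * split; [apply Hsys; lra|].
        split; [apply is_derive_scal, is_derive_weight; lra | nra].
      * split; [apply Rlt_le, Rdiv_lt_0_compat; lra | unfold k; right; field; lra].
    + destruct (ode_v_bounded_at_one_zero c b 0 (fun t => u1 (- t)) (fun t => u2 (- t))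
                  (fun t => - v1 (- t)) (fun t => - v2 (- t))) as [B1 B2]; try lra.
      * intros x Hx. apply (ode_at_reflect c b (fun _ => 1)), ode_at_weight_0, Hsys. lra.
      * rewrite <- (Ropp_involutive 1). apply filterlim_reflect_at_right, Hu1.
      * rewrite <- (Ropp_involutive 1). apply filterlim_reflect_at_right, Hu2.
      * rewrite <- (Ropp_involutive 1) in B1, B2.
        split; apply eventually_bounded_reflect_at_right; assumption.
Qed.

Lemma ode_v_bounded_at_right_end x0 eps c b u1 u2 v1 v2 : 0 < x0 <= 1 -> 0 <= eps ->
  (forall x, - x0 < x < x0 -> ode_at c b (weight eps) u1 u2 v1 v2 x) ->
  filterlim u1 (at_left x0) (locally 0) -> filterlim u2 (at_left x0) (locally 0) ->
  eventually_bounded (at_left x0) v1 /\ eventually_bounded (at_left x0) v2.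
Proof.
  intros Hx0 Heps Hsys Hu1 Hu2. destruct (Rlt_or_le x0 1) as [Hlt | Hge].
  - destruct (ode_v_bounded_of_coeff_bounded c b (fun t => weight eps (- t))
                (fun t => u1 (- t)) (fun t => u2 (- t)) (fun t => - v1 (- t)) (fun t => - v2 (- t))
                (- x0) 0 (weight eps x0 / (1 - x0 ^ 2))) as [B1 B2];
      [lra | | apply filterlim_reflect_at_left, Hu1 | apply filterlim_reflect_at_left, Hu2 |].
    + intros z Hz. split; [apply ode_at_reflect, Hsys; lra|].
      replace (z ^ 2) with ((- z) ^ 2) by ring. apply weight_coeff_le; lra.
    + split; apply eventually_bounded_reflect_at_left; assumption.
  - assert (x0 = 1) by lra. subst x0. destruct (Rle_lt_or_eq_dec 0 eps Heps) as [Hpos | <-].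
    + apply (ode_v_bounded_at_one_pos eps c b 0 (weight eps) u1 u2 v1 v2); auto; [lra|].
      intros x Hx. split; [apply weight_pos|].
      split; [apply is_derive_weight; lra | apply Hsys; lra].
    + apply (ode_v_bounded_at_one_zero c b 0 u1 u2 v1 v2); auto; [lra|].
      intros x Hx. apply ode_at_weight_0, Hsys. lra.
Qed.

(** * From the eigenvalue problem to the system *)

Lemma ode_at_of_eigen_equation eps mu x (dPsi Phi dPhi : R -> C) : -1 < x < 1 ->
  is_derive (fun y => (RtoC (1 - y ^ 2) * dPsi y)%C) x (Phi x) ->
  is_derive Phi x (dPhi x) ->
  (dPhi x + RtoC (eps / (1 - x ^ 2)) * Phi x = mu * dPsi x)%C ->
  ode_at (Re mu) (Im mu) (weight eps)
    (fun y => (1 - y ^ 2) * fst (dPsi y)) (fun y => (1 - y ^ 2) * snd (dPsi y))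
    (fun y => weight eps y * fst (Phi y)) (fun y => weight eps y * snd (Phi y)) x.
Proof.
  intros Hx Hu HPhi Heq.
  assert (Hp := weight_pos eps x). assert (Hden : 0 < 1 - x ^ 2) by nra.
  assert (E1 : fst (dPhi x)
                = Re mu * fst (dPsi x) - Im mu * snd (dPsi x) - eps / (1 - x ^ 2) * fst (Phi x))
    by (apply (f_equal fst) in Heq; unfold Cplus, Cmult, RtoC, Re, Im in *; simpl in *; lra).
  assert (E2 : snd (dPhi x)
                = Re mu * snd (dPsi x) + Im mu * fst (dPsi x) - eps / (1 - x ^ 2) * snd (Phi x))
    by (apply (f_equal snd) in Heq; unfold Cplus, Cmult, RtoC, Re, Im in *; simpl in *; lra).
  refine (conj _ (conj _ (conj _ _))); eapply is_derive_value.
  - apply (is_derive_ext (fun y => fst (RtoC (1 - y ^ 2) * dPsi y)%C));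
      [intros t; unfold Cmult, RtoC; simpl; ring | apply is_derive_fst, Hu].
  - field. lra.
  - apply (is_derive_ext (fun y => snd (RtoC (1 - y ^ 2) * dPsi y)%C));
      [intros t; unfold Cmult, RtoC; simpl; ring | apply is_derive_snd, Hu].
  - field. lra.
  - apply is_derive_Rmult; [apply is_derive_weight, Hx | apply is_derive_fst, HPhi].
  - rewrite E1. field. lra.
  - apply is_derive_Rmult; [apply is_derive_weight, Hx | apply is_derive_snd, HPhi].
  - rewrite E2. field. lra.
Qed.

Lemma filterlim_scaled_components_0 {F : (R -> Prop) -> Prop} {FF : Filter F}
  (h : R -> R) (g : R -> C) :
  filterlim (fun y => (RtoC (h y) * g y)%C) F (locally (RtoC 0)) ->
  filterlim (fun y => h y * fst (g y)) F (locally 0) /\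
  filterlim (fun y => h y * snd (g y)) F (locally 0).
Proof.
  intros H. split.
  - apply (filterlim_ext (fun y => fst (RtoC (h y) * g y)%C));
      [intros y; unfold Cmult, RtoC; simpl; ring | apply filterlim_fst_0, H].
  - apply (filterlim_ext (fun y => snd (RtoC (h y) * g y)%C));
      [intros y; unfold Cmult, RtoC; simpl; ring | apply filterlim_snd_0, H].
Qed.

Lemma filterlim_bounded_scale_components_0 {F : (R -> Prop) -> Prop} {FF : Filter F}
  (h : R -> R) (g : R -> C) M :
  F (fun y => Rabs (h y) <= M) -> filterlim g F (locally (RtoC 0)) ->
  filterlim (fun y => h y * fst (g y)) F (locally 0) /\
  filterlim (fun y => h y * snd (g y)) F (locally 0).
Proof.
  intros Hh Hg. split; apply (filterlim_bounded_mult_0 h _ M Hh);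
    [apply filterlim_fst_0 | apply filterlim_snd_0]; exact Hg.
Qed.

Lemma eigen_boundary_u_vanishes x0 (dPsi : R -> C) : 0 < x0 <= 1 ->
  (x0 < 1 -> filterlim dPsi (at_right (- x0)) (locally (RtoC 0))
          /\ filterlim dPsi (at_left x0) (locally (RtoC 0))) ->
  (x0 = 1 -> filterlim (fun x => (RtoC (1 - x ^ 2) * dPsi x)%C) (at_right (- 1)) (locally (RtoC 0))
          /\ filterlim (fun x => (RtoC (1 - x ^ 2) * dPsi x)%C) (at_left 1) (locally (RtoC 0))) ->
  (filterlim (fun y => (1 - y ^ 2) * fst (dPsi y)) (at_right (- x0)) (locally 0) /\
   filterlim (fun y => (1 - y ^ 2) * snd (dPsi y)) (at_right (- x0)) (locally 0)) /\
  (filterlim (fun y => (1 - y ^ 2) * fst (dPsi y)) (at_left x0) (locally 0) /\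
   filterlim (fun y => (1 - y ^ 2) * snd (dPsi y)) (at_left x0) (locally 0)).
Proof.
  intros Hx0 Hbc0 Hbc1. destruct (Rlt_or_le x0 1) as [Hlt | Hge].
  - destruct (Hbc0 Hlt) as [Hl Hr].
    assert (Hh : forall y, - x0 < y < x0 -> Rabs (1 - y ^ 2) <= 1) by (intros; apply Rabs_le; nra).
    split; apply (filterlim_bounded_scale_components_0 _ _ 1); auto.
    + apply (at_right_of_interval _ (- x0) x0); [lra | exact Hh].
    + apply (at_left_of_interval _ (- x0) x0); [lra | exact Hh].
  - assert (x0 = 1) by lra. subst x0. destruct (Hbc1 eq_refl) as [Hl Hr].
    split; apply filterlim_scaled_components_0; assumption.
Qed.

Lemma eigen_u_nonzero x0 (Psi dPsi : R -> C) : 0 < x0 <= 1 ->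
  (forall x, - x0 < x < x0 -> is_derive Psi x (dPsi x)) ->
  ~ (exists c : C, forall x, - x0 < x < x0 -> Psi x = c) ->
  ~ (forall x, - x0 < x < x0 -> (1 - x ^ 2) * fst (dPsi x) = 0 /\ (1 - x ^ 2) * snd (dPsi x) = 0).
Proof.
  intros Hx0 Hd Hnc Hu. apply Hnc. exists (Psi 0). intros x Hx.
  assert (Hzero : forall z, - x0 < z < x0 -> fst (dPsi z) = 0 /\ snd (dPsi z) = 0).
  { intros z Hz. destruct (Hu z Hz) as [H1 H2]. assert (1 - z ^ 2 <> 0) by nra.
    split; [apply (Rmult_eq_reg_l (1 - z ^ 2)) | apply (Rmult_eq_reg_l (1 - z ^ 2))]; lra. }
  apply injective_projections.
  - apply (eq_of_derive_zero (fun y => fst (Psi y)) (fun y => fst (dPsi y)) (- x0) x0); try lra.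
    intros z Hz. split; [apply is_derive_fst, Hd, Hz | apply Hzero, Hz].
  - apply (eq_of_derive_zero (fun y => snd (Psi y)) (fun y => snd (dPsi y)) (- x0) x0); try lra.
    intros z Hz. split; [apply is_derive_snd, Hd, Hz | apply Hzero, Hz].
Qed.

Lemma eigenfunction_ode x0 eps mu Psi : 0 < x0 <= 1 -> eigenfunction x0 eps mu Psi ->
  exists u1 u2 v1 v2 : R -> R,
    (forall x, - x0 < x < x0 -> ode_at (Re mu) (Im mu) (weight eps) u1 u2 v1 v2 x) /\
    ((filterlim u1 (at_right (- x0)) (locally 0) /\ filterlim u2 (at_right (- x0)) (locally 0)) /\
     (filterlim u1 (at_left x0) (locally 0) /\ filterlim u2 (at_left x0) (locally 0))) /\
    ~ (forall x, - x0 < x < x0 -> u1 x = 0 /\ u2 x = 0).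
Proof.
  intros Hx0 (dPsi & Phi & dPhi & Hd & _ & Hbc0 & Hbc1 & Hnc).
  exists (fun y => (1 - y ^ 2) * fst (dPsi y)), (fun y => (1 - y ^ 2) * snd (dPsi y)),
         (fun y => weight eps y * fst (Phi y)), (fun y => weight eps y * snd (Phi y)).
  split; [|split].
  - intros x Hx. destruct (Hd x Hx) as (_ & Hu & HPhi & Heq).
    apply (ode_at_of_eigen_equation eps mu x dPsi Phi dPhi); auto. lra.
  - apply eigen_boundary_u_vanishes; auto.
  - apply (eigen_u_nonzero x0 Psi); auto. intros x Hx. apply Hd, Hx.
Qed.

Theorem theorem7 (x0 eps : R) (mu : C) :
  0 < x0 <= 1 -> 0 <= eps ->
  is_eigenvalue x0 eps mu -> mu <> RtoC 0 ->
  Im mu = 0 /\ Re mu < 0.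
Proof.
  intros Hx0 Heps [Psi HPsi] Hmu.
  destruct (eigenfunction_ode x0 eps mu Psi Hx0 HPsi)
    as (u1 & u2 & v1 & v2 & Hsys & [[Hl1 Hl2] [Hr1 Hr2]] & Hnz).
  destruct (ode_v_bounded_at_left_end x0 eps (Re mu) (Im mu) u1 u2 v1 v2) as [Bl1 Bl2]; auto.
  destruct (ode_v_bounded_at_right_end x0 eps (Re mu) (Im mu) u1 u2 v1 v2) as [Br1 Br2]; auto.
  assert (Hsign : forall alpha beta, 0 <= alpha -> alpha * Re mu + beta * Im mu <= 0).
  { intros alpha beta Halpha. apply Rnot_lt_le. intros Hk. apply Hnz.
    apply (ode_u_eq0 (Re mu) (Im mu) (weight eps) u1 u2 v1 v2 alpha beta); auto; try lra.
    intros x Hx. split; [apply weight_pos | auto]. }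
  pose proof (Hsign 0 (Im mu) (Rle_refl 0)) as Him_sq. pose proof (Hsign 1 0 Rle_0_1) as Hre_le.
  assert (Him : Im mu = 0) by nra. split; [exact Him|].
  destruct (Rle_lt_or_eq_dec _ _ Hre_le) as [Hre | Hre]; [lra|]. exfalso. apply Hmu.
  destruct mu as [re im]. unfold Re, Im, RtoC in *. simpl in *. f_equal; lra.
Qed.
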